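(* Let $G$ be a finite transitive permutation group whose point stabilizers have order $2$, and let $\mathcal{F}$ be a basic intersecting set of $G$. Then the subgroup $\langle \mathcal{F}\rangle$ generated by $\mathcal{F}$ is an elementary abelian $2$-group.
   Context: For a permutation group $G$ on a finite set $V$, a subset $\mathcal{F}\subseteq G$ is intersecting if for all $g,h\in\mathcal{F}$ there is $v\in V$ with $g(v)=h(v)$. A basic intersecting set is an intersecting set containing the identity. *)

From mathcomp Require Import all_boot all_fingroup all_solvable.
Set Implicit Arguments. Unset Strict Implicit. Unset Printing Implicit Defensive.
Local Open Scope group_scope.

Definition intersecting (T : finType) (F : {set {perm T}}) : Prop :=
  forall g h, g \in F -> h \in F -> exists v : T, g v = h v.

Definition basic_intersecting (T : finType) (G : {group {perm T}})
    (F : {set {perm T}}) : Prop :=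
  [/\ F \subset G, 1 \in F & intersecting F].

From mathcomp Require Import all_boot all_fingroup all_solvable.
Set Implicit Arguments. Unset Strict Implicit. Unset Printing Implicit Defensive.
Local Open Scope group_scope.

(* Every element of a basic intersecting set F agrees with 1 somewhere, and any
   g h^-1 with g, h in F agrees with 1 where g and h agree; so all of these fix
   a point and lie in a point stabilizer of order 2, hence square to 1.  If g,
   h and g h^-1 are all involutions then g and h commute, so F is a commuting
   set of involutions and <<F>> is abelian of exponent 2. *)

Lemma expg2_eq1_invg (gT : finGroupType) (x : gT) : x ^+ 2 = 1 -> x^-1 = x.
Proof. by move=> x2; rewrite -(mulg1 x^-1) -x2 expgS expg1 mulKg. Qed.

Lemma commute_involutions (gT : finGroupType) (g h : gT) :
  g ^+ 2 = 1 -> h ^+ 2 = 1 -> (g * h^-1) ^+ 2 = 1 -> commute g h.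
Proof.
move=> /expg2_eq1_invg g2 /expg2_eq1_invg h2 /expg2_eq1_invg.
by rewrite invMg invgK g2 h2.
Qed.

Lemma expg2_fix_of_stab2 (T : finType) (G : {group {perm T}}) (x : T)
    (a : {perm T}) :
  #|'C_G[x | 'P]| = 2 -> a \in G -> a x = x -> a ^+ 2 = 1.
Proof.
move=> stab2 aG ax; rewrite -stab2; apply: expg_cardG.
by rewrite inE aG; apply/astab1P.
Qed.

Lemma intersecting_mulV_fix (T : finType) (F : {set {perm T}}) (g h : {perm T}) :
  intersecting F -> g \in F -> h \in F -> exists x, (g * h^-1) x = x.
Proof.
move=> intF gF hF; have [x ghx] := intF g h gF hF.
by exists x; rewrite permM ghx -permM mulgV perm1.
Qed.

Section BasicIntersecting.

Variables (T : finType) (G : {group {perm T}}) (F : {set {perm T}}).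
Hypothesis stab2 : forall x : T, #|'C_G[x | 'P]| = 2.
Hypothesis basicF : basic_intersecting G F.

Lemma basic_intersecting_mulV_expg2 g h :
  g \in F -> h \in F -> (g * h^-1) ^+ 2 = 1.
Proof.
have [sFG _ intF] := basicF; move=> gF hF.
have [x ghx] := intersecting_mulV_fix intF gF hF.
apply: (expg2_fix_of_stab2 (stab2 x) _ ghx).
by rewrite groupM ?groupV ?(subsetP sFG).
Qed.

Lemma basic_intersecting_expg2 g : g \in F -> g ^+ 2 = 1.
Proof.
have [_ F1 _] := basicF; move=> gF.
by rewrite -[g]mulg1 -[X in g * X]invg1 basic_intersecting_mulV_expg2.
Qed.

Lemma basic_intersecting_abelian : abelian F.
Proof.
apply/centsP=> g gF h hF; apply: commute_sym.
by apply: commute_involutions;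
  [exact: basic_intersecting_expg2 | exact: basic_intersecting_expg2
  | exact: basic_intersecting_mulV_expg2].
Qed.

End BasicIntersecting.

Theorem lemma3p1 (T : finType) (G : {group {perm T}}) (F : {set {perm T}}) :
  [transitive G, on [set: T] | 'P] ->
  (forall x : T, #|'C_G[x | 'P]| = 2%N) ->
  basic_intersecting G F ->
  2.-abelem <<F>>.
Proof.
move=> _ stab2 basicF; apply: exponent2_abelem.
rewrite abelian_exponent_gen ?(basic_intersecting_abelian stab2 basicF) //.
by apply/exponentP=> g; apply: (basic_intersecting_expg2 stab2 basicF).
Qed.
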